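(* Let $x_1,\dots,x_n,y_1,\dots,y_n\in\mathbb C$ and define the $n\times n$ matrix $M$ by $$\sum_{k=1}^nM_{jk}u^{k-1}=\prod_{1\le i<j}(u-x_i)\prod_{j<i\le n}(u+y_i),\qquad j=1,\dots,n.$$ Then $\det M=\prod_{1\le i<j\le n}(x_i+y_j)$. *)

From HB Require Import structures.
From mathcomp Require Import all_boot all_order all_algebra.
From mathcomp Require Import complex.
Set Implicit Arguments. Unset Strict Implicit. Unset Printing Implicit Defensive.
Import Order.TTheory GRing.Theory Num.Theory.
Local Open Scope ring_scope.

(* Indices are 0-based: row j : 'I_n stands for j+1, column k : 'I_n for the
   coefficient of u^k (= u^{(k+1)-1}). *)
Definition rowpoly (F : comRingType) (n : nat) (x y : 'I_n -> F) (j : 'I_n) : {poly F} :=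
  (\prod_(i < n | (i < j)%N) ('X - (x i)%:P)) * (\prod_(i < n | (j < i)%N) ('X + (y i)%:P)).

Definition Mmat (F : comRingType) (n : nat) (x y : 'I_n -> F) : 'M[F]_n :=
  \matrix_(j < n, k < n) (rowpoly x y j)`_k.

From HB Require Import structures.
From mathcomp Require Import all_boot all_order all_algebra.
From mathcomp Require Import complex.
Set Implicit Arguments.
Unset Strict Implicit.
Unset Printing Implicit Defensive.

Import Order.TTheory GRing.Theory Num.Theory.
Local Open Scope ring_scope.

(* Divide every row polynomial by u - x_1.  For j > 1 the j-th one is
   (u - x_1) times the (j-1)-th row polynomial of the data with x_1 and y_1
   deleted, while the first one leaves the remainder \prod_(i > 1) (x_1 + y_i).
   On coefficient rows, passing from (remainder, quotient) to the polynomial is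
   right multiplication by a unitriangular matrix, so det M is that remainder
   times the determinant of the same matrix of size n - 1. *)

Section CoefficientMatrix.

Variable R : comNzRingType.
Implicit Types (a : R) (p q : {poly R}).

Lemma size_mulXsubC a q : q != 0 -> size (q * ('X - a%:P)) = (size q).+1.
Proof. by move=> nz_q; rewrite size_Mmonic ?monicXsubC // size_XsubC addn2. Qed.

Lemma divXsubC_exists n a p : (size p <= n.+1)%N ->
  exists2 q : {poly R}, (size q <= n)%N & p = q * ('X - a%:P) + p.[a]%:P.
Proof.
move=> szp; have /factor_theorem[q Dq] : root (p - p.[a]%:P) a.
  by rewrite rootE !hornerE subrr.
exists q; last by rewrite -Dq subrK.
have [-> | nz_q] := eqVneq q 0; first by rewrite size_poly0.
rewrite -ltnS -(size_mulXsubC a nz_q) -Dq (leq_trans (size_polyD _ _)) //.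
by rewrite geq_max szp size_polyN (leq_trans (size_polyC_leq1 _)).
Qed.

Definition coefmx {m} n (p : 'I_m -> {poly R}) : 'M[R]_(m, n) :=
  \matrix_(j, k) (p j)`_k.

Definition mulXsubC_mx n a : 'M[R]_n.+1 :=
  \matrix_(k, l) (((k : nat) == l)%:R - a *+ ((k : nat) == l.+1)).

Lemma det_mulXsubC_mx n a : \det (mulXsubC_mx n a) = 1.
Proof.
rewrite det_trig; last first.
  apply/forallP => k; apply/forallP => l; apply/implyP => lt_kl.
  by rewrite mxE (ltn_eqF lt_kl) (ltn_eqF (ltn_trans lt_kl (ltnSn l))) subrr.
by rewrite big1 // => k _; rewrite mxE eqxx (ltn_eqF (ltnSn k)) subr0.
Qed.

Lemma sum_coef_delta n p m : (size p <= n)%N ->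
  \sum_(k < n) p`_k *+ ((k : nat) == m) = p`_m.
Proof.
move=> szp; have [lt_mn | le_nm] := ltnP m n.
  rewrite (bigD1 (Ordinal lt_mn)) //= eqxx big1 ?addr0 // => k.
  by rewrite -val_eqE /= => /negPf ->.
rewrite nth_default ?(leq_trans szp) // big1 // => k _.
by rewrite ltn_eqF // (leq_trans (ltn_ord k) le_nm).
Qed.

Lemma coefmx_mulXsubC m n a (p q : 'I_m -> {poly R}) (c : 'I_m -> R) :
  (forall j, size (q j) <= n)%N ->
  (forall j, p j = q j * ('X - a%:P) + (c j)%:P) ->
  coefmx n.+1 p = coefmx n.+1 (fun j => q j * 'X + (c j)%:P) *m mulXsubC_mx n a.
Proof.
move=> szq Dp; apply/matrixP => j l; rewrite !mxE.
have szs : (size (q j * 'X + (c j)%:P)%R <= n.+1)%N.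
  rewrite (leq_trans (size_polyD _ _)) // geq_max (leq_trans (size_polyC_leq1 _)) //.
  have [-> | nz_q] := eqVneq (q j) 0; first by rewrite mul0r size_poly0.
  by rewrite size_mulX // ltnS andbT.
under eq_bigr => k _ do rewrite !mxE mulrBr mulr_natr mulrnAr [_ * a]mulrC -mulrnAr.
rewrite sumrB -mulr_sumr !sum_coef_delta // Dp mulrBr.
rewrite !(coefD, coefN, coefMX, coefMC, coefC) /=.
by rewrite addr0 [_ * a]mulrC addrAC.
Qed.

Lemma expand_det_col0 n (A : 'M[R]_n.+1) : (forall i, A (lift ord0 i) ord0 = 0) ->
  \det A = A ord0 ord0 * \det (row' ord0 (col' ord0 A)).
Proof.
move=> A_col0; rewrite (expand_det_col A ord0) big_ord_recl big1 ?addr0.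
  by rewrite /cofactor expr0 mul1r.
by move=> i _; rewrite A_col0 mul0r.
Qed.

Lemma det_coefmx_factor n a (p : 'I_n.+1 -> {poly R}) (q : 'I_n -> {poly R}) :
  (size (p ord0) <= n.+1)%N -> (forall j, size (q j) <= n)%N ->
  (forall j, p (lift ord0 j) = q j * ('X - a%:P)) ->
  \det (coefmx n.+1 p) = (p ord0).[a] * \det (coefmx n q).
Proof.
move=> szp0 szq Dp; have [q0 szq0 Dp0] := divXsubC_exists a szp0.
pose Q j := if unlift ord0 j is Some j' then q j' else q0.
have szQ j : (size (Q j) <= n)%N by rewrite /Q; case: unliftP.
pose c (j : 'I_n.+1) := if unlift ord0 j is Some _ then 0 else (p ord0).[a].
have DpQ j : p j = Q j * ('X - a%:P) + (c j)%:P.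
  by rewrite /Q /c; case: unliftP => [j'|] ->; rewrite ?Dp ?addr0.
rewrite (coefmx_mulXsubC szQ DpQ) det_mulmx det_mulXsubC_mx mulr1.
rewrite expand_det_col0 => [|i]; last by rewrite !mxE /c liftK coefD coefMX coefC add0r.
have -> : row' ord0 (col' ord0 (coefmx n.+1 (fun j => Q j * 'X + (c j)%:P))) = coefmx n q.
  by apply/matrixP => i k; rewrite !mxE /Q liftK coefD coefMX coefC addr0.
by rewrite mxE /c unlift_none coefD coefMX coefC add0r.
Qed.

End CoefficientMatrix.

Section RowPolynomials.

Variable R : comNzRingType.

Lemma rowpoly0 n (x y : 'I_n.+1 -> R) :
  rowpoly x y ord0 = \prod_(i < n) ('X + (y (lift ord0 i))%:P).
Proof. by rewrite /rowpoly big_pred0 // mul1r big_mkcond big_ord_recl /= mul1r. Qed.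

Lemma rowpoly_lift n (x y : 'I_n.+1 -> R) (j : 'I_n) :
  rowpoly x y (lift ord0 j) =
  rowpoly (x \o lift ord0) (y \o lift ord0) j * ('X - (x ord0)%:P).
Proof.
rewrite /rowpoly (big_mkcond (fun i : 'I_n.+1 => i < lift ord0 j)%N).
rewrite (big_mkcond (fun i : 'I_n.+1 => lift ord0 j < i)%N) !big_ord_recl /=.
by rewrite mul1r -mulrA mulrC /rowpoly -!big_mkcond.
Qed.

Lemma size_rowpoly n (x y : 'I_n -> R) j : size (rowpoly x y j) = n.
Proof.
elim: n x y j => [|n IH] x y j; first by case: j.
case: (unliftP ord0 j) => [j'|] ->.
  rewrite rowpoly_lift size_mulXsubC ?IH //.
  by rewrite -size_poly_gt0 IH (leq_trans _ (ltn_ord j')).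
rewrite rowpoly0; under eq_bigr => i _ do rewrite -[(y _)%:P]opprK -polyCN.
by rewrite size_prod_XsubC [index_enum _]unlock -enumT size_enum_ord.
Qed.

Lemma det_Mmat n (x y : 'I_n -> R) :
  \det (Mmat x y) = \prod_(i < n) \prod_(j < n | (i < j)%N) (x i + y j).
Proof.
elim: n x y => [|n IH] x y; first by rewrite det_mx00 big_ord0.
have szp0 : (size (rowpoly x y ord0) <= n.+1)%N by rewrite size_rowpoly.
have szq j : (size (rowpoly (x \o lift ord0) (y \o lift ord0) j) <= n)%N.
  by rewrite size_rowpoly.
rewrite [LHS](det_coefmx_factor szp0 szq (rowpoly_lift x y)) IH.
rewrite rowpoly0 horner_prod big_ord_recl; congr (_ * _).
  rewrite [RHS]big_mkcond big_ord_recl /= mul1r.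
  by apply: eq_bigr => i _; rewrite hornerD hornerX hornerC.
apply: eq_bigr => i _; rewrite [RHS]big_mkcond big_ord_recl /= mul1r big_mkcond.
exact: eq_bigr.
Qed.

End RowPolynomials.

Theorem lemma5p2 (R : rcfType) (n : nat) (x y : 'I_n -> R[i]) :
  \det (Mmat x y) = \prod_(i < n) \prod_(j < n | (i < j)%N) (x i + y j).
Proof. exact: det_Mmat. Qed.
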